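(* Let $P$ be a poset and $e:P\to L$ a join-completion of $P$. Then $(\mathcal{U}_e)^-$ is maximal.
   Context: A join-completion of $P$ is an order embedding $e:P\to L$ into a complete lattice with every $x\in L$ equal to $\bigvee\{e(p):e(p)\le x\}$. $\Gamma_e$ is the standard closure operator on $P$ whose closed sets are the sets $e^{-1}(x^\downarrow)$, $x\in L$, and $\mathcal{U}_e=\{S\subseteq P:\bigvee S\text{ exists in }P\text{ and }\bigvee S\in\Gamma_e(S)\}$. A join-specification for $P$ is a set $\mathcal{U}\subseteq\wp(P)$ such that $\bigvee S$ exists for every $S\in\mathcal{U}$ and $\{p\}\in\mathcal{U}$ for all $p$. A $\mathcal{U}$-ideal is a down-closed $C$ with $\bigvee S\in C$ whenever $S\in\mathcal{U}$, $S\subseteq C$; $\mathcal{I}_{\mathcal{U}}$ is the lattice of $\mathcal{U}$-ideals; $\Gamma_{\mathcal{U}}(S)$ the smallest $\mathcal{U}$-ideal containing $S$; $\mathcal{U}^+=\{S:\bigvee S\text{ exists and }\bigvee S\in\Gamma_{\mathcal{U}}(S)\}$; $\mathcal{U}$ is maximal if $\mathcal{U}=\mathcal{U}^+$ and frame-generating if $\mathcal{I}_{\mathcal{U}}$ is a frame. For a join-specification $\mathcal{V}$, $\mathcal{V}^-$ denotes the largest frame-generating join-specification contained in $\mathcal{V}$ (which exists). *)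

Section Defs.

Definition is_partial_order {T : Type} (le : T -> T -> Prop) : Prop :=
  (forall x, le x x) /\
  (forall x y, le x y -> le y x -> x = y) /\
  (forall x y z, le x y -> le y z -> le x z).

Definition is_lub {T : Type} (le : T -> T -> Prop) (S : T -> Prop) (x : T) : Prop :=
  (forall s, S s -> le s x) /\
  (forall y, (forall s, S s -> le s y) -> le x y).

Definition is_complete_lattice {T : Type} (le : T -> T -> Prop) : Prop :=
  is_partial_order le /\ forall S : T -> Prop, exists x, is_lub le S x.

Definition subset {T : Type} (A B : T -> Prop) : Prop := forall x, A x -> B x.

Definition down_closed {T : Type} (le : T -> T -> Prop) (C : T -> Prop) : Prop :=
  forall x y, le x y -> C y -> C x.

Definition order_embedding {P L : Type} (leP : P -> P -> Prop)
  (leL : L -> L -> Prop) (e : P -> L) : Prop :=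
  forall p q, leP p q <-> leL (e p) (e q).

Definition join_completion {P L : Type} (leP : P -> P -> Prop)
  (leL : L -> L -> Prop) (e : P -> L) : Prop :=
  is_complete_lattice leL /\ order_embedding leP leL e /\
  forall x : L, is_lub leL (fun y => exists p, y = e p /\ leL (e p) x) x.

(* Gamma_e: the closure operator on P whose closed sets are e^{-1}(x^down),
   x in L: Gamma_e(S) is the intersection of all closed sets containing S. *)
Definition Gamma_e {P L : Type} (leL : L -> L -> Prop) (e : P -> L)
  (S : P -> Prop) : P -> Prop :=
  fun p => forall x : L, (forall s, S s -> leL (e s) x) -> leL (e p) x.

Definition U_e {P L : Type} (leP : P -> P -> Prop) (leL : L -> L -> Prop)
  (e : P -> L) : (P -> Prop) -> Prop :=
  fun S => exists j, is_lub leP S j /\ Gamma_e leL e S j.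

Definition join_spec {P : Type} (leP : P -> P -> Prop)
  (U : (P -> Prop) -> Prop) : Prop :=
  (forall S, U S -> exists j, is_lub leP S j) /\
  (forall p, U (fun q => q = p)).

Definition U_ideal {P : Type} (leP : P -> P -> Prop)
  (U : (P -> Prop) -> Prop) (C : P -> Prop) : Prop :=
  down_closed leP C /\
  forall S, U S -> subset S C -> forall j, is_lub leP S j -> C j.

Definition Gamma_U {P : Type} (leP : P -> P -> Prop)
  (U : (P -> Prop) -> Prop) (S : P -> Prop) : P -> Prop :=
  fun p => forall C, U_ideal leP U C -> subset S C -> C p.

Definition U_plus {P : Type} (leP : P -> P -> Prop)
  (U : (P -> Prop) -> Prop) : (P -> Prop) -> Prop :=
  fun S => exists j, is_lub leP S j /\ Gamma_U leP U S j.

Definition maximal_spec {P : Type} (leP : P -> P -> Prop)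
  (U : (P -> Prop) -> Prop) : Prop :=
  forall S, U S <-> U_plus leP U S.

(* I_U is a frame.  In the complete lattice I_U (ordered by inclusion) the
   meet of two ideals is their intersection and the join of a family B of
   ideals is Gamma_U of their union; the frame law is
     A /\ \/B = \/ { A /\ b | b in B }. *)
Definition frame_generating {P : Type} (leP : P -> P -> Prop)
  (U : (P -> Prop) -> Prop) : Prop :=
  forall (A : P -> Prop) (B : (P -> Prop) -> Prop),
    U_ideal leP U A -> (forall b, B b -> U_ideal leP U b) ->
    forall p,
      (A p /\ Gamma_U leP U (fun q => exists b, B b /\ b q) p) <->
      Gamma_U leP U (fun q => exists b, B b /\ A q /\ b q) p.

Definition is_minus {P : Type} (leP : P -> P -> Prop)
  (V W : (P -> Prop) -> Prop) : Prop :=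
  join_spec leP W /\ frame_generating leP W /\ subset W V /\
  forall W', join_spec leP W' -> frame_generating leP W' -> subset W' V ->
    subset W' W.

End Defs.

From Stdlib Require Import Setoid.

(* W^+ has exactly the same ideals as W, hence the same closure operator, so it
   is again a frame-generating join-specification.  Every set e^{-1}(x^down) is a
   U_e-ideal, which makes U_e maximal; as W is contained in U_e, so is W^+.
   Since W = (U_e)^- is the largest frame-generating join-specification inside
   U_e, we get W^+ = W. *)

Section JoinSpecifications.

Variables (P : Type) (leP : P -> P -> Prop).
Hypothesis HP : is_partial_order leP.

Lemma lub_unique (S : P -> Prop) (j j' : P) :
  is_lub leP S j -> is_lub leP S j' -> j = j'.
Proof.
  intros [Hub Hleast] [Hub' Hleast'].
  destruct HP as [_ [Hantisym _]].
  apply Hantisym; [apply Hleast; exact Hub' | apply Hleast'; exact Hub].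
Qed.

Lemma U_ideal_antimono (U V : (P -> Prop) -> Prop) (C : P -> Prop) :
  subset U V -> U_ideal leP V C -> U_ideal leP U C.
Proof.
  intros HUV [Hdown Hjoin]; split; [exact Hdown|].
  intros S HS. apply Hjoin, HUV, HS.
Qed.

Lemma Gamma_U_mono (U V : (P -> Prop) -> Prop) (S : P -> Prop) (p : P) :
  subset U V -> Gamma_U leP U S p -> Gamma_U leP V S p.
Proof.
  intros HUV Hp C HC. apply Hp. exact (U_ideal_antimono U V C HUV HC).
Qed.

Lemma U_plus_mono (U V : (P -> Prop) -> Prop) :
  subset U V -> subset (U_plus leP U) (U_plus leP V).
Proof.
  intros HUV S [j [Hj Hgamma]].
  exists j; split; [exact Hj | exact (Gamma_U_mono U V S j HUV Hgamma)].
Qed.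

Variable U : (P -> Prop) -> Prop.
Hypothesis HU : join_spec leP U.

Lemma subset_U_plus : subset U (U_plus leP U).
Proof.
  intros S HS. destruct (proj1 HU S HS) as [j Hj].
  exists j; split; [exact Hj|].
  intros C [_ Hjoin] Hsub. exact (Hjoin S HS Hsub j Hj).
Qed.

Lemma join_spec_U_plus : join_spec leP (U_plus leP U).
Proof.
  split.
  - intros S [j [Hj _]]. exists j; exact Hj.
  - intros p. apply subset_U_plus, HU.
Qed.

Lemma U_ideal_U_plus (C : P -> Prop) :
  U_ideal leP (U_plus leP U) C <-> U_ideal leP U C.
Proof.
  split.
  - apply U_ideal_antimono, subset_U_plus.
  - intros HC. split; [exact (proj1 HC)|].
    intros S [j' [Hj' Hgamma]] Hsub j Hj.
    rewrite (lub_unique S j j' Hj Hj').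
    exact (Hgamma C HC Hsub).
Qed.

Lemma Gamma_U_U_plus (S : P -> Prop) (p : P) :
  Gamma_U leP (U_plus leP U) S p <-> Gamma_U leP U S p.
Proof.
  split; intros Hp C HC; apply Hp; apply U_ideal_U_plus; exact HC.
Qed.

Lemma frame_generating_U_plus :
  frame_generating leP U -> frame_generating leP (U_plus leP U).
Proof.
  intros Hframe A B HA HB p.
  rewrite !Gamma_U_U_plus.
  apply Hframe.
  - apply U_ideal_U_plus, HA.
  - intros b Hb. apply U_ideal_U_plus, HB, Hb.
Qed.

End JoinSpecifications.

Section JoinCompletions.

Variables (P L : Type) (leP : P -> P -> Prop) (leL : L -> L -> Prop) (e : P -> L).
Hypothesis HP : is_partial_order leP.
Hypothesis He : join_completion leP leL e.

Lemma U_ideal_U_e_preimage_down (x : L) :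
  U_ideal leP (U_e leP leL e) (fun p => leL (e p) x).
Proof.
  destruct He as [[[_ [_ HtransL]] _] [Hemb _]].
  split.
  - intros p q Hpq Hq. apply (HtransL _ (e q)); [apply Hemb, Hpq | exact Hq].
  - intros S [j' [Hj' Hgamma]] Hsub j Hj.
    rewrite (lub_unique P leP HP S j j' Hj Hj').
    exact (Hgamma x Hsub).
Qed.

Lemma Gamma_U_U_e_sub_Gamma_e (S : P -> Prop) (p : P) :
  Gamma_U leP (U_e leP leL e) S p -> Gamma_e leL e S p.
Proof.
  intros Hp x Hx. exact (Hp _ (U_ideal_U_e_preimage_down x) Hx).
Qed.

Lemma U_plus_U_e_sub : subset (U_plus leP (U_e leP leL e)) (U_e leP leL e).
Proof.
  intros S [j [Hj Hgamma]].
  exists j; split; [exact Hj | exact (Gamma_U_U_e_sub_Gamma_e S j Hgamma)].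
Qed.

End JoinCompletions.

Theorem lemma5p4 (P : Type) (leP : P -> P -> Prop) (L : Type)
  (leL : L -> L -> Prop) (e : P -> L)
  (HP : is_partial_order leP) (He : join_completion leP leL e)
  (W : (P -> Prop) -> Prop) (HW : is_minus leP (U_e leP leL e) W) :
  maximal_spec leP W.
Proof.
  destruct HW as [HWspec [HWframe [HWsub HWlargest]]].
  intros S; split; [apply subset_U_plus, HWspec|].
  apply HWlargest.
  - exact (join_spec_U_plus P leP W HWspec).
  - exact (frame_generating_U_plus P leP HP W HWspec HWframe).
  - intros T HT.
    apply (U_plus_U_e_sub P L leP leL e HP He).
    exact (U_plus_mono P leP W _ HWsub T HT).
Qed.
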